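(* Let $q$ be a prime power and $n\in\{q-1,q,q+1\}$. Then any two linear $(n,q^{n-2},3)_q$ codes over $\mathbb{F}_q$ are equivalent.
   Context: An $(n,M,d)_q$ code over $\mathbb{F}_q$ is a subset of $\mathbb{F}_q^n$ with $M$ elements and minimum Hamming distance $d$; it is linear if it is an $\mathbb{F}_q$-subspace. Two codes of length $n$ are equivalent if one can be obtained from the other by a permutation of the coordinates followed by a permutation of the symbols of $\mathbb{F}_q$ in each coordinate separately (possibly different permutations in different coordinates). *)

From HB Require Import structures.
From mathcomp Require Import all_boot all_order all_algebra all_fingroup.
Set Implicit Arguments. Unset Strict Implicit. Unset Printing Implicit Defensive.
Import GRing.Theory.
Local Open Scope ring_scope.

Definition hamming (F : finFieldType) (n : nat) (x y : 'rV[F]_n) : nat :=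
  #|[set i : 'I_n | x 0 i != y 0 i]|.

Definition min_dist (F : finFieldType) (n : nat) (C : {set 'rV[F]_n}) (d : nat) : Prop :=
  (exists x y, [/\ x \in C, y \in C, x != y & hamming x y = d]) /\
  (forall x y, x \in C -> y \in C -> x != y -> (d <= hamming x y)%N).

Definition linear_code (F : finFieldType) (n : nat) (C : {set 'rV[F]_n}) : Prop :=
  [/\ 0 \in C,
      (forall x y, x \in C -> y \in C -> x + y \in C) &
      (forall (a : F) x, x \in C -> a *: x \in C)].

Definition is_code (F : finFieldType) (n : nat) (C : {set 'rV[F]_n}) (M d : nat) : Prop :=
  #|C| = M /\ min_dist C d.

Definition code_equiv (F : finFieldType) (n : nat) (C1 C2 : {set 'rV[F]_n}) : Prop :=
  exists (s : 'S_n) (pi : 'I_n -> {perm F}),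
    C2 = [set (\row_i (pi i) (x 0 (s i)) : 'rV[F]_n) | x : 'rV[F]_n in C1].

From HB Require Import structures.
From mathcomp Require Import all_boot all_order all_algebra all_fingroup.
From mathcomp Require Import ring zify.
Import GRing.Theory.
Local Open Scope ring_scope.

(* A linear code of length n, dimension n - 2 and minimum distance 3 is the
   kernel of a 2 x n check matrix whose columns are pairwise independent, i.e.
   represent n distinct points of the projective line over F_q, which has
   q + 1 points.  For n >= q - 1 at most two points are left uncovered, and as
   PGL(2, q) is 2-transitive an invertible 2 x 2 matrix maps the uncovered
   points of one check matrix onto those of the other.  It then maps covered
   points onto covered points, so the two check matrices differ by this matrix,
   a permutation of the columns and nonzero column scalings, which is a
   monomial equivalence of the codes. *)

Section Plane.
Set Implicit Arguments. Unset Strict Implicit.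
Variable F : fieldType.
Implicit Types (c : F) (u v w a b p r : F * F).

Definition det2 u v := u.1 * v.2 - u.2 * v.1.
Definition scale2 c v := (c * v.1, c * v.2).
Definition lin2 a b v := (v.1 * a.1 + v.2 * b.1, v.1 * a.2 + v.2 * b.2).

Lemma det2C u v : det2 u v = - det2 v u.
Proof. by rewrite /det2; ring. Qed.

Lemma det2vv v : det2 v v = 0.
Proof. by rewrite /det2; ring. Qed.

Lemma det2_lin2 a b u v : det2 (lin2 a b u) (lin2 a b v) = det2 a b * det2 u v.
Proof. by rewrite /det2 /=; ring. Qed.

Lemma lin2_eq0 a b v : det2 a b != 0 -> (lin2 a b v == (0, 0)) = (v == (0, 0)).
Proof.
case: a b v => [a1 a2] [b1 b2] [v1 v2] D; rewrite /lin2 /det2 /= in D *.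
apply/idP/idP => [/eqP[e1 e2]|/eqP[-> ->]]; last by rewrite !mul0r addr0.
(* Multiply by the adjugate of the matrix with rows a, b. *)
have E1 : (a1 * b2 - a2 * b1) * v1 = b2 * (v1 * a1 + v2 * b1) - b1 * (v1 * a2 + v2 * b2).
  by ring.
have E2 : (a1 * b2 - a2 * b1) * v2 = a1 * (v1 * a2 + v2 * b2) - a2 * (v1 * a1 + v2 * b1).
  by ring.
rewrite e1 e2 !mulr0 subr0 in E1 E2.
by move/eqP: E1; move/eqP: E2; rewrite !mulf_eq0 (negbTE D) /= => /eqP-> /eqP->.
Qed.

Lemma lin2_neq0 a b v : det2 a b != 0 -> v != (0, 0) -> lin2 a b v != (0, 0).
Proof. by move=> D; rewrite lin2_eq0. Qed.

Lemma det2_eq0_trans u v w :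
  u != (0, 0) -> det2 u v = 0 -> det2 u w = 0 -> det2 v w = 0.
Proof.
case: u v w => [u1 u2] [v1 v2] [w1 w2]; rewrite /det2 /= => nz e1 e2.
have E1 : u1 * (v1 * w2 - v2 * w1) = (u1 * w2 - u2 * w1) * v1 - (u1 * v2 - u2 * v1) * w1.
  by ring.
have E2 : u2 * (v1 * w2 - v2 * w1) = (u1 * w2 - u2 * w1) * v2 - (u1 * v2 - u2 * v1) * w2.
  by ring.
rewrite e1 e2 !mul0r subr0 in E1 E2.
have [u10|u1n0] := eqVneq u1 0; last by move/eqP: E1; rewrite mulf_eq0 (negbTE u1n0) => /eqP.
have u2n0 : u2 != 0 by apply: contraNneq nz => ->; rewrite u10.
by move/eqP: E2; rewrite mulf_eq0 (negbTE u2n0) => /eqP.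
Qed.

Lemma det2_eq0_scale2 u v : u != (0, 0) -> det2 u v = 0 -> exists c, v = scale2 c u.
Proof.
case: u v => [u1 u2] [v1 v2]; rewrite /det2 /scale2 /= => nz /eqP; rewrite subr_eq0 => /eqP e.
have [u10|u1n0] := eqVneq u1 0.
  have u2n0 : u2 != 0 by apply: contraNneq nz => ->; rewrite u10.
  have v10 : v1 = 0 by apply/(mulfI u2n0); rewrite -e u10 !mul0r mulr0.
  by exists (v2 / u2); rewrite u10 v10 mulr0 divfK.
by exists (v1 / u1); congr pair; [rewrite divfK | apply/(mulfI u1n0); rewrite e; field].
Qed.

Lemma det2_complete u : u != (0, 0) -> exists v, det2 u v != 0.
Proof.
case: u => u1 u2 nz; have [u10|u1n0] := eqVneq u1 0.
  exists (1, 0); rewrite /det2 /= u10 mulr0 sub0r mulr1 oppr_eq0.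
  by apply: contraNneq nz => ->; rewrite u10.
by exists (0, 1); rewrite /det2 /= mulr1 mulr0 subr0.
Qed.

Lemma lin2_transitive p r p' r' : det2 p r != 0 -> det2 p' r' != 0 ->
  exists a b, [/\ det2 a b != 0, lin2 a b p = p' & lin2 a b r = r'].
Proof.
case: p r p' r' => [p1 p2] [r1 r2] [s1 s2] [t1 t2]; rewrite /det2 /lin2 /= => D D'.
set d := p1 * r2 - p2 * r1.
(* a, b are the rows of [p; r]^-1 * [p'; r']. *)
exists ((s1 * r2 - t1 * p2) / d, (s2 * r2 - t2 * p2) / d).
exists ((p1 * t1 - r1 * s1) / d, (p1 * t2 - r1 * s2) / d); rewrite /=; split.
- suff -> : (s1 * r2 - t1 * p2) / d * ((p1 * t2 - r1 * s2) / d) -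
            (s2 * r2 - t2 * p2) / d * ((p1 * t1 - r1 * s1) / d) = (s1 * t2 - s2 * t1) / d.
    by rewrite mulf_neq0 ?invr_eq0.
  by rewrite /d; field.
- by congr pair; rewrite /d; field.
- by congr pair; rewrite /d; field.
Qed.

End Plane.

Section ProjectiveLine.
Set Implicit Arguments. Unset Strict Implicit.
Variable F : finFieldType.
Implicit Types (u v p r : F * F).

(* Normalized representatives of the q + 1 points of the projective line. *)
Definition pline : {set F * F} := [set p | (p.1 == 1) || (p == (0, 1))].
Definition pnorm v : F * F := if v.1 != 0 then (1, v.2 / v.1) else (0, 1).

Lemma pnorm_pline v : pnorm v \in pline.
Proof. by rewrite /pnorm inE; case: ifP; rewrite /= eqxx ?orbT. Qed.

Lemma pline_neq0 p : p \in pline -> p != (0, 0).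
Proof.
case: p => p1 p2; rewrite inE /= => /orP[/eqP->|/eqP[-> ->]];
  by rewrite xpair_eqE oner_eq0 ?andbF.
Qed.

Lemma det2_pnorm v : v != (0, 0) -> det2 (pnorm v) v = 0.
Proof.
case: v => v1 v2; rewrite /pnorm /det2 /=.
by case: ifP => [v1n0|/negbFE/eqP->] _; rewrite /= ?mul1r ?divfK ?mul0r ?subrr.
Qed.

Lemma pline_det2_eq0 p v : p \in pline -> v != (0, 0) -> det2 p v = 0 -> p = pnorm v.
Proof.
case: p v => [p1 p2] [v1 v2]; rewrite inE /det2 /pnorm /= => /orP[/eqP->|/eqP[-> ->]] nz.
  rewrite mul1r => /eqP; rewrite subr_eq0 => /eqP e.
  have [v10|v1n0] := eqVneq v1 0; last by rewrite e; congr pair; field.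
  by move: nz; rewrite e v10 mulr0 => /eqP.
rewrite mul0r mul1r sub0r => /eqP; rewrite oppr_eq0 => /eqP v10.
by rewrite v10 eqxx.
Qed.

Lemma pline_det2_neq0 p r : p \in pline -> r \in pline -> p != r -> det2 p r != 0.
Proof.
move=> pP rP; apply: contra_neq => e.
rewrite (pline_det2_eq0 pP (pline_neq0 rP) e).
exact/esym/(pline_det2_eq0 rP (pline_neq0 rP) (det2vv r)).
Qed.

Lemma card_pline : #|pline| = #|F|.+1.
Proof.
have -> : pline = (0, 1) |: [set (1, t) | t : F].
  apply/setP => -[x y]; rewrite !inE /= orbC; congr (_ || _).
  by apply/eqP/imsetP => [->|[t _ [-> _]]] //; exists y.
rewrite cardsU1 card_imset => [|s t [] //].
suff -> : (0, 1) \notin [set ((1 : F), t) | t : F] by [].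
by apply/imsetP => -[t _ [] /esym/eqP]; rewrite oner_eq0.
Qed.

Definition pairwise_indep n (h : 'I_n -> F * F) :=
  (forall i, h i != (0, 0)) /\ (forall i j, i != j -> det2 (h i) (h j) != 0).

Definition uncovered n (h : 'I_n -> F * F) : {set F * F} :=
  [set p in pline | [forall i, det2 p (h i) != 0]].

Lemma uncovered_sub n (h : 'I_n -> F * F) : uncovered h \subset pline.
Proof. by apply/subsetP => p; rewrite inE => /andP[]. Qed.

Lemma card_uncovered n (h : 'I_n -> F * F) :
  pairwise_indep h -> #|uncovered h| = (#|F|.+1 - n)%N.
Proof.
move=> [hnz hind]; pose covered := [set pnorm (h i) | i in 'I_n].
have card_covered : #|covered| = n.
  rewrite card_imset ?card_ord // => i j e; apply: (contraNeq (hind i j)); rewrite negbK.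
  apply/eqP; apply: (det2_eq0_trans (pline_neq0 (pnorm_pline (h i)))).
    exact: det2_pnorm.
  by rewrite e det2_pnorm.
have -> : uncovered h = pline :\: covered.
  apply/setP => p; rewrite in_setD in_set andbC; case pP: (p \in pline); rewrite ?andbF ?andbT //.
  apply/forallP/negP => [H /imsetP[i _ ep]|H i]; first by move: (H i); rewrite ep det2_pnorm ?eqxx.
  by apply/eqP => e; apply: H; apply/imsetP; exists i; rewrite // (pline_det2_eq0 pP (hnz i) e).
have sub : covered \subset pline by apply/subsetP => _ /imsetP[i _ ->]; exact: pnorm_pline.
by rewrite cardsD (setIidPr sub) card_pline card_covered.
Qed.

End ProjectiveLine.
Arguments pline {F}.

Section Matching.
Set Implicit Arguments. Unset Strict Implicit.
Variable F : finFieldType.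
Implicit Types (a b : F * F) (U : {set F * F}).

Definition check_equiv n (h1 h2 : 'I_n -> F * F) :=
  exists a b (s : 'S_n) (lam : 'I_n -> F), [/\ det2 a b != 0, forall i, lam i != 0 &
    forall i, h2 i = scale2 (lam i) (lin2 a b (h1 (s i)))].

Lemma lin2_cover_small U1 U2 : U1 \subset pline -> U2 \subset pline ->
  #|U1| = #|U2| -> (#|U1| <= 2)%N ->
  exists a b, det2 a b != 0 /\
    forall p', p' \in U2 -> exists2 p, p \in U1 & det2 (lin2 a b p) p' = 0.
Proof.
move=> /subsetP sU1 /subsetP sU2 eU; case: (ltngtP #|U1| 1) => [lt1 _|gt1 le2|eq1 _].
- exists (1, 0), (0, 1); split=> [|p']; first by rewrite /det2 /= mulr1 mulr0 subr0 oner_eq0.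
  by move: lt1; rewrite eU ltnS leqn0 cards_eq0 => /eqP->; rewrite inE.
- have /cards2P[p [r [npr defU1]]] : #|U1| == 2 by rewrite eqn_leq le2.
  have /cards2P[p' [r' [npr' defU2]]] : #|U2| == 2 by rewrite -eU eqn_leq le2.
  have [pP rP] : p \in pline /\ r \in pline by split; apply: sU1; rewrite defU1 !inE eqxx ?orbT.
  have [pP' rP'] : p' \in pline /\ r' \in pline.
    by split; apply: sU2; rewrite defU2 !inE eqxx ?orbT.
  have [a [b [D ep er]]] :=
    lin2_transitive (pline_det2_neq0 pP rP npr) (pline_det2_neq0 pP' rP' npr').
  exists a, b; split=> // u; rewrite defU2 !inE => /orP[]/eqP->.
    by exists p; rewrite ?defU1 ?inE ?eqxx // ep det2vv.
  by exists r; rewrite ?defU1 ?inE ?eqxx ?orbT // er det2vv.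
- have /cards1P[p defU1] : #|U1| == 1 by rewrite eq1.
  have /cards1P[p' defU2] : #|U2| == 1 by rewrite -eU eq1.
  have [r D] : exists r, det2 p r != 0.
    by apply/det2_complete/pline_neq0/sU1; rewrite defU1 inE.
  have [r' D'] : exists r', det2 p' r' != 0.
    by apply/det2_complete/pline_neq0/sU2; rewrite defU2 inE.
  have [a [b [Dab ep _]]] := lin2_transitive D D'.
  exists a, b; split=> // u; rewrite defU2 inE => /eqP->.
  by exists p; rewrite ?defU1 ?inE // ep det2vv.
Qed.

Section Families.
Variables (n : nat) (h1 h2 : 'I_n -> F * F).
Hypotheses (indep1 : pairwise_indep h1) (indep2 : pairwise_indep h2).

Lemma lin2_covered a b : det2 a b != 0 ->
  (forall p', p' \in uncovered h2 ->
     exists2 p, p \in uncovered h1 & det2 (lin2 a b p) p' = 0) ->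
  forall j, exists i, det2 (lin2 a b (h1 j)) (h2 i) = 0.
Proof.
move=> D cover j.
(* Otherwise the point of [lin2 a b (h1 j)] is uncovered, hence the image of an
   uncovered point, which must then be the point of [h1 j]. *)
have [i /eqP|nodep] := pickP (fun i => det2 (lin2 a b (h1 j)) (h2 i) == 0); first by exists i.
have vnz : lin2 a b (h1 j) != (0, 0) by rewrite lin2_neq0 ?indep1.1.
have pvnz := pline_neq0 (pnorm_pline (lin2 a b (h1 j))).
have [|p pU dep] := cover (pnorm (lin2 a b (h1 j))).
  rewrite inE pnorm_pline; apply/forallP => i; apply: contraFN (nodep i) => /eqP e.
  by rewrite (det2_eq0_trans pvnz (det2_pnorm vnz) e).
have : det2 (lin2 a b p) (lin2 a b (h1 j)) = 0.
  by apply: (det2_eq0_trans pvnz _ (det2_pnorm vnz)); rewrite det2C dep oppr0.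
move: pU; rewrite inE det2_lin2 => /andP[_ /forallP/(_ j)].
by move=> nz /eqP; rewrite mulf_eq0 (negbTE D) (negbTE nz).
Qed.

Lemma check_equiv_of_lin2 a b : det2 a b != 0 ->
  (forall j, exists i, det2 (lin2 a b (h1 j)) (h2 i) = 0) -> check_equiv h1 h2.
Proof.
move=> D /fin_all_exists[g dep_g].
have g_inj : injective g.
  move=> j j' e; apply: (contraNeq (@indep1.2 j j')); rewrite negbK; apply/eqP.
  have hgnz := indep2.1 (g j).
  have : det2 (lin2 a b (h1 j)) (lin2 a b (h1 j')) = 0.
    by apply: (det2_eq0_trans hgnz); [|rewrite e]; rewrite det2C dep_g oppr0.
  by rewrite det2_lin2 => /eqP; rewrite mulf_eq0 (negbTE D) => /eqP.
pose s := (perm g_inj)^-1%g.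
have dep_s i : det2 (lin2 a b (h1 (s i))) (h2 i) = 0.
  by rewrite -{2}(permKV (perm g_inj) i) permE dep_g.
have /fin_all_exists[lam def_h2] i : exists c, h2 i = scale2 c (lin2 a b (h1 (s i))).
  by apply: det2_eq0_scale2 (dep_s i); rewrite lin2_neq0 ?indep1.1.
exists a, b, s, lam; split=> // i; apply: contra (indep2.1 i) => /eqP lam0.
by rewrite def_h2 lam0 /scale2 !mul0r.
Qed.

End Families.

Lemma pairwise_indep_check_equiv n (h1 h2 : 'I_n -> F * F) :
  pairwise_indep h1 -> pairwise_indep h2 -> (#|F|.+1 - n <= 2)%N -> check_equiv h1 h2.
Proof.
move=> indep1 indep2 small.
have card12 : #|uncovered h1| = #|uncovered h2| by rewrite !card_uncovered.
have small1 : (#|uncovered h1| <= 2)%N by rewrite card_uncovered.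
have [a [b [D cover]]] := lin2_cover_small (uncovered_sub h1) (uncovered_sub h2) card12 small1.
by apply: (check_equiv_of_lin2 indep1 indep2 D); apply: lin2_covered cover.
Qed.

End Matching.

Section Codes.
Set Implicit Arguments. Unset Strict Implicit.
Variables (F : finFieldType) (n : nat).
Implicit Types (h : 'I_n -> F * F) (x y w : 'rV[F]_n).

Definition syndrome h w : F * F := (\sum_i w 0 i * (h i).1, \sum_i w 0 i * (h i).2).
Definition parity_code h : {set 'rV[F]_n} := [set w | syndrome h w == (0, 0)].

Lemma syndrome_monomial h1 h2 a b (s : 'S_n) (lam : 'I_n -> F) x :
  (forall i, lam i != 0) ->
  (forall i, h2 i = scale2 (lam i) (lin2 a b (h1 (s i)))) ->
  syndrome h2 (\row_i ((lam i)^-1 * x 0 (s i))) = lin2 a b (syndrome h1 x).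
Proof.
move=> lam_nz def_h2; rewrite /syndrome /lin2 /=.
have reindex (f : F * F -> F) : \sum_j x 0 j * f (h1 j) = \sum_i x 0 (s i) * f (h1 (s i)).
  exact: (reindex_inj (@perm_inj _ s)).
rewrite !reindex !mulr_suml -!big_split /=.
by congr pair; apply: eq_bigr => i _; rewrite def_h2 mxE /=; field; apply: lam_nz.
Qed.

Lemma parity_code_equiv h1 h2 :
  check_equiv h1 h2 -> code_equiv (parity_code h1) (parity_code h2).
Proof.
move=> [a [b [s [lam [D lam_nz def_h2]]]]].
have lamV_nz i : (lam i)^-1 != 0 by rewrite invr_eq0.
exists s, (fun i => perm (mulfI (lamV_nz i))).
have in_code2 x : (\row_i ((lam i)^-1 * x 0 (s i)) \in parity_code h2) = (x \in parity_code h1).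
  by rewrite !inE (syndrome_monomial _ lam_nz def_h2) lin2_eq0.
apply/setP => w; apply/idP/imsetP => [w2|[x x1 ->]].
- pose x := \row_j (lam (s^-1%g j) * w 0 (s^-1%g j)).
  have def_w : w = \row_i ((lam i)^-1 * x 0 (s i)).
    by apply/rowP => i; rewrite !mxE permK mulrA mulVf ?mul1r.
  exists x; first by rewrite -in_code2 -def_w.
  by rewrite [LHS]def_w; apply/rowP => i; rewrite !mxE permE.
- suff -> : \row_i (perm (mulfI (lamV_nz i))) (x 0 (s i)) = \row_i ((lam i)^-1 * x 0 (s i)).
    by rewrite in_code2.
  by apply/rowP => i; rewrite !mxE permE.
Qed.

Definition spike2 (al be : F) i j : 'rV[F]_n := \row_l (al * (l == i)%:R + be * (l == j)%:R).

Lemma sum_spike2 (g : 'I_n -> F) al be i j :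
  \sum_l spike2 al be i j 0 l * g l = al * g i + be * g j.
Proof.
have spike c k : \sum_l c * (l == k)%:R * g l = c * g k.
  by rewrite (bigD1 k) //= eqxx mulr1 big1 ?addr0 // => l /negbTE->; rewrite mulr0 mul0r.
by rewrite -!spike -big_split; apply: eq_bigr => l _; rewrite mxE mulrDl.
Qed.

Lemma syndrome_spike2 h al be i j :
  syndrome h (spike2 al be i j) =
    (al * (h i).1 + be * (h j).1, al * (h i).2 + be * (h j).2).
Proof. by rewrite /syndrome !sum_spike2. Qed.

Lemma min_dist_card (C : {set 'rV[F]_n}) d : min_dist C d -> (1 < #|C|)%N.
Proof.
case=> [[x [y [xC yC nxy _]]] _]; apply: leq_trans (subset_leq_card (_ : [set x; y] \subset C)).
  by rewrite cards2 nxy.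
by apply/subsetP => z; rewrite !inE => /orP[]/eqP->.
Qed.

Lemma hamming_le2 x y i j :
  (forall l, l != i -> l != j -> x 0 l = y 0 l) -> (hamming x y <= 2)%N.
Proof.
move=> agree; apply: (@leq_trans #|[set i; j]|); last by rewrite cards2; case: (i != j).
apply/subset_leq_card/subsetP => l; rewrite !inE; apply: contraR.
by rewrite negb_or => /andP[li lj]; rewrite agree.
Qed.

Lemma parity_code_indep h :
  (forall x y, x \in parity_code h -> y \in parity_code h -> x != y -> (3 <= hamming x y)%N) ->
  pairwise_indep h.
Proof.
move=> dist.
(* A dependent pair of columns yields a nonzero codeword of weight at most 2. *)
have zero_in : 0 \in parity_code h.
  by rewrite inE /syndrome !big1 // => i _; rewrite mxE mul0r.
have spike0 al be i j : spike2 al be i j \in parity_code h -> spike2 al be i j = 0.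
  move=> sC; apply/eqP; apply: contraT => nz.
  have := dist _ _ sC zero_in nz; rewrite leqNgt ltnS (@hamming_le2 _ _ i j) // => l li lj.
  by rewrite !mxE (negbTE li) (negbTE lj) !mulr0 addr0.
have hnz i : h i != (0, 0).
  apply/eqP => hi0; have := spike0 1 0 i i.
  rewrite inE syndrome_spike2 hi0 /= !mulr0 addr0 eqxx => /(_ isT)/rowP/(_ i)/eqP.
  by rewrite !mxE eqxx mul0r addr0 mul1r oner_eq0.
split=> // i j nij; apply/eqP => dep.
have [c hj] := det2_eq0_scale2 (hnz i) dep.
have := spike0 c (-1) i j.
rewrite inE syndrome_spike2 hj /scale2 /= !mulN1r !subrr eqxx => /(_ isT)/rowP/(_ j)/eqP.
by rewrite /spike2 !mxE eqxx (eq_sym j) (negbTE nij) mulr0 add0r mulr1 oppr_eq0 oner_eq0.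
Qed.

End Codes.

Section SystematicForm.
Set Implicit Arguments. Unset Strict Implicit.
Variables (F : finFieldType) (k : nat) (C : {set 'rV[F]_k.+2}).
Hypotheses (C_lin : linear_code C)
  (C_dist : forall x y, x \in C -> y \in C -> x != y -> (3 <= hamming x y)%N).

Definition red0 : 'I_k.+2 := Ordinal (leqnSn k.+1).
Definition red1 : 'I_k.+2 := ord_max.

Lemma ord_split (l : 'I_k.+2) : [\/ (l < k)%N, l = red0 | l = red1].
Proof.
have [lk|kl] := ltnP l k; first exact: Or31.
have /orP[] : (l == k :> nat) || (l == k.+1 :> nat) by have := ltn_ord l; lia.
  by move=> /eqP e; apply/Or32/val_inj.
by move=> /eqP e; apply/Or33/val_inj.
Qed.

Lemma red1_neq_red0 : red1 != red0.
Proof. by rewrite -val_eqE /= eqn_leq ltnn. Qed.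

Lemma sum_red (f : 'I_k.+2 -> F) : \sum_(l : 'I_k.+2 | ~~ (l < k)%N) f l = f red0 + f red1.
Proof.
rewrite (bigD1 red0) ?ltnn //= (bigD1 red1) /=; last by rewrite red1_neq_red0 -leqNgt leqnSn.
rewrite big1 ?addr0 // => l /andP[/andP[lk l0] l1].
by case: (ord_split l) => [lk'|e|e]; [move: lk | move: l0 | move: l1]; rewrite ?lk' ?e ?eqxx.
Qed.

Lemma eq_codeword_low x y : x \in C -> y \in C ->
  (forall l : 'I_k.+2, (l < k)%N -> x 0 l = y 0 l) -> x = y.
Proof.
move=> xC yC agree; apply/eqP; apply: contraT => /(C_dist xC yC).
rewrite ltnNge (@hamming_le2 _ _ _ _ red0 red1) // => l l0 l1.
by case: (ord_split l) => [/agree//|e|e]; [move: l0 | move: l1]; rewrite e eqxx.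
Qed.

Section Basis.
Variable d : 'I_k.+2 -> 'rV[F]_k.+2.
Hypotheses (d_in : forall j, d j \in C)
  (d_low : forall j l : 'I_k.+2, (l < k)%N -> d j 0 l = (l == j)%:R).

Definition completion (w : 'rV[F]_k.+2) := \sum_(j : 'I_k.+2 | (j < k)%N) w 0 j *: d j.

Lemma completionE w (l : 'I_k.+2) :
  completion w 0 l = \sum_(j : 'I_k.+2 | (j < k)%N) w 0 j * d j 0 l.
Proof. by rewrite summxE; apply: eq_bigr => j _; rewrite mxE. Qed.

Lemma completion_in w : completion w \in C.
Proof.
case: C_lin => C0 CD CZ; apply: (big_ind (fun x => x \in C)) => // j _.
exact/CZ/d_in.
Qed.

Lemma completion_low w (l : 'I_k.+2) : (l < k)%N -> completion w 0 l = w 0 l.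
Proof.
move=> lk; rewrite completionE (bigD1 l) //= d_low // eqxx mulr1 big1 ?addr0 //.
move=> j /andP[_ jl].
by rewrite d_low // eq_sym (negbTE jl) mulr0.
Qed.

(* Columns of the check matrix [A^T | -1] of the systematic generator matrix [1 | A]. *)
Definition check_col (l : 'I_k.+2) : F * F :=
  if (l < k)%N then (d l 0 red0, d l 0 red1)
  else if l == red0 then (-1, 0) else (0, -1).

Lemma syndrome_check_col w :
  syndrome check_col w = (completion w 0 red0 - w 0 red0, completion w 0 red1 - w 0 red1).
Proof.
rewrite /syndrome !completionE; congr pair;
  rewrite (bigID (fun l : 'I_k.+2 => (l < k)%N)) sum_red /check_col /= ltnn eqxx;
  rewrite ltnNge leqnSn /= (negbTE red1_neq_red0) /= mulr0 mulrN1 ?addr0 ?add0r;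
  by congr (_ - _); apply: eq_bigr => l ->.
Qed.

Lemma code_parity_check : C = parity_code check_col.
Proof.
apply/setP => w; rewrite inE syndrome_check_col xpair_eqE !subr_eq0.
apply/idP/andP => [wC|[/eqP w0 /eqP w1]].
  by rewrite (eq_codeword_low (completion_in w) wC (@completion_low w)) !eqxx.
suff -> : w = completion w by exact: completion_in.
apply/rowP => l; case: (ord_split l) => [lk|->|->]; by rewrite ?w0 ?w1 ?completion_low.
Qed.

End Basis.

Hypothesis card_C : #|C| = (#|F| ^ k)%N.

Definition low_coords (x : 'rV[F]_k.+2) : 'rV[F]_k := \row_j x 0 (widen_ord (leqW (leqnSn k)) j).

Lemma low_coordsE x (l : 'I_k.+2) (lk : (l < k)%N) : low_coords x 0 (Ordinal lk) = x 0 l.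
Proof. by rewrite mxE; congr (x 0 _); apply: val_inj. Qed.

Lemma low_coords_onto z : exists2 c, c \in C & low_coords c = z.
Proof.
have low_inj : {in C &, injective low_coords}.
  move=> x y xC yC e; apply: eq_codeword_low => // l lk.
  by rewrite -!(low_coordsE _ lk) e.
have : z \in low_coords @: C.
  suff -> : low_coords @: C = setT by rewrite inE.
  by apply/eqP; rewrite eqEcard subsetT cardsT card_mx mul1n card_in_imset // card_C leqnn.
by case/imsetP=> c cC ->; exists c.
Qed.

Lemma systematic_basis : exists2 d : 'I_k.+2 -> 'rV[F]_k.+2,
  forall j, d j \in C & forall j l : 'I_k.+2, (l < k)%N -> d j 0 l = (l == j)%:R.
Proof.
suff /fin_all_exists2[d d_in d_low] : forall j : 'I_k.+2, exists2 c, c \in C &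
    forall l : 'I_k.+2, (l < k)%N -> c 0 l = (l == j)%:R by exists d.
move=> j; have [c cC low_c] := low_coords_onto (\row_(m < k) (m == j :> nat)%:R).
by exists c => // l lk; rewrite -(low_coordsE _ lk) low_c mxE -val_eqE.
Qed.

Lemma linear_code_parity : exists2 h : 'I_k.+2 -> F * F, pairwise_indep h & C = parity_code h.
Proof.
have [d d_in d_low] := systematic_basis.
have C_eq := code_parity_check d_in d_low.
by exists (check_col d) => //; apply: parity_code_indep; rewrite -C_eq.
Qed.

End SystematicForm.

Theorem lemma5 (F : finFieldType) (q n : nat) (hq : #|F| = q)
  (hn : n = q.-1 \/ n = q \/ n = q.+1)
  (C1 C2 : {set 'rV[F]_n}) :
  linear_code C1 -> is_code C1 (q ^ (n - 2)) 3 ->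
  linear_code C2 -> is_code C2 (q ^ (n - 2)) 3 ->
  code_equiv C1 C2.
Proof.
move=> lin1 [card1 dist1] lin2 [card2 dist2]; have := min_dist_card dist1.
case: n hn C1 C2 lin1 card1 dist1 lin2 card2 dist2 => [|[|k]] hn C1 C2 lin1 card1 dist1
  lin2 card2 dist2; rewrite card1 ?expn0 // => _.
rewrite !subSS subn0 -hq in card1 card2.
have [h1 indep1 ->] := linear_code_parity lin1 dist1.2 card1.
have [h2 indep2 ->] := linear_code_parity lin2 dist2.2 card2.
have small : (#|F|.+1 - k.+2 <= 2)%N by rewrite hq; case: hn => [|[|]] ->; lia.
exact/parity_code_equiv/pairwise_indep_check_equiv.
Qed.
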